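(* Let $n\ge1$, let $a_1,\dots,a_n\ge2$ be integers, $d_0=1$, $d_i=a_1\cdots a_i$, and $I'_n=\{\kappa\in\{1,\dots,d_n\}\mid a_n\nmid\kappa\}$. Let $K_n:=\{\mathbf{k}=(k_1,\dots,k_n)\in\mathbb{Z}^n\mid 0\le k_i\le a_i-1\ (i=1,\dots,n-1),\ 0\le k_n\le a_n-2\}$. Then the map $$\psi:K_n\to I'_n,\qquad \psi(k_1,\dots,k_n):=\sum_{l=1}^n(-1)^{l-1}\frac{d_n}{d_l}(k_l+1)$$ is a well-defined bijection between sets of $d_n-d_{n-1}$ elements, and it satisfies $\omega^{(n)}_{\psi(\mathbf{k}),i}=\omega^{(n)}_{\mathbf{k},i}$ for all $\mathbf{k}\in K_n$ and $i=1,\dots,n$. In particular $\psi(0,\dots,0)=\sum_{l=1}^n(-1)^{l-1}\frac{d_n}{d_l}$.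
   Context: Here, for $\mathbf{k}\in\mathbb{Z}^n$, $(\omega^{(n)}_{\mathbf{k},1},\dots,\omega^{(n)}_{\mathbf{k},n}):=(k_1+1,\dots,k_n+1)\mathbb{E}^{-T}$ with $\mathbb{E}=(a_i\delta_{i,j}+\delta_{i+1,j})_{i,j=1}^n$ and $\mathbb{E}^{-T}=(\mathbb{E}^{-1})^T$; and for $\kappa\in I'_n$, $\omega^{(n)}_{\kappa,i}:=(-1)^{i-1}\frac{d_{i-1}}{d_n}\kappa-\lfloor(-1)^{i-1}\frac{d_{i-1}}{d_n}\kappa\rfloor$. *)

From HB Require Import structures.
From mathcomp Require Import all_boot all_order all_algebra.
Set Implicit Arguments. Unset Strict Implicit. Unset Printing Implicit Defensive.
Import Order.TTheory GRing.Theory Num.Theory.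
Local Open Scope ring_scope.

(* Conventions: the integers a_1,...,a_n are given by a : nat -> nat, used at
   indices 1..n.  Vectors k = (k_1,...,k_n) in Z^n are row vectors 'rV[int]_n,
   with k_l stored at column l-1 (0-based ordinal). *)

Definition d (a : nat -> nat) (i : nat) : nat := (\prod_(1 <= j < i.+1) a j)%N.

Definition inK (a : nat -> nat) (n : nat) (k : 'rV[int]_n) : bool :=
  [forall l : 'I_n, (0 <= k 0 l) &&
     (k 0 l <= (a l.+1)%:Z - (if l.+1 == n then 2 else 1))].

Definition inIp (a : nat -> nat) (n : nat) (kappa : int) : bool :=
  (1 <= kappa) && (kappa <= (d a n)%:Z) && ~~ ((a n)%:Z %| kappa)%Z.

Definition psi (a : nat -> nat) (n : nat) (k : 'rV[int]_n) : int :=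
  \sum_(l < n) (-1) ^+ l * ((d a n %/ d a l.+1)%N)%:Z * (k 0 l + 1).

Definition Emx (a : nat -> nat) (n : nat) : 'M[rat]_n :=
  \matrix_(i < n, j < n)
    ((a i.+1)%:R * (i == j :> nat)%:R + (i.+1 == j :> nat)%:R).

Definition omega_vec (a : nat -> nat) (n : nat) (k : 'rV[int]_n) : 'rV[rat]_n :=
  (map_mx (fun z : int => z%:~R) (k + const_mx 1)) *m (invmx (Emx a n))^T.

(* omega_{kappa,i} for i = i0+1 (i0 : 'I_n is 0-based):
   x - floor x  with  x = (-1)^(i-1) d_{i-1}/d_n kappa *)
Definition omega_kappa (a : nat -> nat) (n : nat) (kappa : int) (i0 : 'I_n) : rat :=
  let x : rat := (-1) ^+ i0 * ((d a i0)%:R / (d a n)%:R) * kappa%:~R in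
  x - (Num.floor x)%:~R.

Arguments d a i : clear implicits.
Arguments inK a n k : clear implicits.
Arguments inIp a n kappa : clear implicits.
Arguments psi a n k : clear implicits.
Arguments Emx a n : clear implicits.
Arguments omega_vec a n k : clear implicits.
Arguments omega_kappa a n kappa i0 : clear implicits.

From HB Require Import structures.
From mathcomp Require Import all_boot all_order all_algebra.
From mathcomp Require Import zify ring lra.
Import Order.TTheory GRing.Theory Num.Theory.
Set Implicit Arguments. Unset Strict Implicit. Unset Printing Implicit Defensive.
Local Open Scope ring_scope.

(* The Horner recursion psi_{m+1} = a_{m+1} psi_m + (-1)^m (k_{m+1} + 1) shows that, once
   every digit in an even position l is reflected (k_l |-> a_l - 1 - k_l), psi_m - [m odd]
   is the mixed-radix number with bases a_1, ..., a_m and these digits.  Hence psi is a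
   bijection from the box 0 <= k_l <= a_l - 1 onto an interval of length d_n, and the last
   digit equals a_n - 1 exactly when a_n divides psi; removing it cuts the box down to K_n
   and the interval down to I'_n.
   For the omega identity, u_l = (-1)^(l-1) (d_(l-1) kappa / d_n - psi_(l-1)) satisfies
   a_l u_l + u_(l+1) = k_l + 1 with u_(n+1) = 0, i.e. u E^T = k + 1, and descending induction
   gives 0 < u_l < 1, so u_l is the fractional part defining omega_(kappa,l). *)

Lemma edivz_uniq (A q q' r r' : int) : 0 <= r < A -> 0 <= r' < A ->
  q * A + r = q' * A + r' -> q = q' /\ r = r'.
Proof.
move=> r_range r'_range eq_qr.
have eq_r : r = r'.
  by rewrite -(modz_small r_range) -(modz_small r'_range) -(modzMDl q) eq_qr modzMDl.
by move: eq_qr; rewrite eq_r => /addIr /mulIf -> //; lia.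
Qed.

Lemma fract_intrD (R : archiNumDomainType) (z : int) (u : R) :
  0 <= u < 1 -> z%:~R + u - (Num.floor (z%:~R + u))%:~R = u.
Proof.
move=> /andP[u_ge0 u_lt1].
rewrite (@floor_def _ _ z); first by rewrite addrAC subrr add0r.
by rewrite intrD lerDl u_ge0 ltrD2l.
Qed.

Lemma sum_mul_eqn (R : pzSemiRingType) m c (F : nat -> R) :
  \sum_(l < m) F l * (c == l :> nat)%:R = if (c < m)%N then F c else 0.
Proof.
rewrite -(big_ord1_eq (@GRing.add R) F c m) [RHS]big_mkcond; apply: eq_bigr => l _.
by rewrite eq_sym; case: eqP; rewrite ?mulr1 ?mulr0.
Qed.

Lemma transport_enum (T : choiceType) (U : eqType) (x0 : T) (P : pred T) (Q : pred U)
    (f : T -> U) :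
  {in P &, injective f} -> (forall x, P x -> Q (f x)) ->
  (forall y, Q y -> exists2 x, P x & f x = y) ->
  forall s : seq U, uniq s -> (forall y, (y \in s) = Q y) ->
  exists s' : seq T, [/\ uniq s', forall x, (x \in s') = P x & size s' = size s].
Proof.
move=> f_inj f_PQ f_surj s s_uniq s_Q.
have preim y : exists x, Q y ==> P x && (f x == y).
  have [/f_surj[x Px <-]|] := boolP (Q y); last by exists x0.
  by exists x; rewrite Px eqxx.
pose g y := xchoose (preim y).
have gK y : Q y -> P (g y) /\ f (g y) = y.
  by move=> Qy; have /implyP/(_ Qy)/andP[-> /eqP] := xchooseP (preim y).
exists (map g s); split; last exact: size_map.
- rewrite map_inj_in_uniq // => y y' /[!s_Q] Qy Qy' eq_g.
  by rewrite -(gK y Qy).2 -(gK y' Qy').2 eq_g.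
- move=> x; apply/mapP/idP => [[y /[!s_Q] /gK[Pgy _] ->] // | Px].
  have Qfx := f_PQ x Px; have [Pgfx fgfx] := gK _ Qfx.
  by exists (f x); rewrite ?s_Q //; apply: f_inj; rewrite ?inE ?fgfx.
Qed.

Section MixedRadix.

Variable a : nat -> nat.

Lemma d0 : d a 0 = 1%N.
Proof. by rewrite /d big_geq. Qed.

Lemma dS m : d a m.+1 = (d a m * a m.+1)%N.
Proof. by rewrite /d big_nat_recr. Qed.

Lemma dvdn_d i j : (i <= j)%N -> (d a i %| d a j)%N.
Proof.
by move=> le_ij; rewrite /d [X in (_ %| X)%N](@big_cat_nat _ _ _ i.+1) //= dvdn_mulr.
Qed.

Lemma d_gt0 m : (forall i, (0 < i <= m)%N -> (0 < a i)%N) -> (0 < d a m)%N.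
Proof.
move=> a_gt0; rewrite /d big_seq; apply: prodn_cond_gt0 => i.
by rewrite mem_index_iota ltnS; apply: a_gt0.
Qed.

Lemma d_gt0_le i m : (i <= m)%N -> (0 < d a m)%N -> (0 < d a i)%N.
Proof. by move=> le_im /dvdn_gt0; apply; apply: dvdn_d. Qed.

Lemma a_gt0_of_d i m : (0 < i <= m)%N -> (0 < d a m)%N -> (0 < a i)%N.
Proof.
case: i => // i /= lt_im /(d_gt0_le lt_im).
by rewrite dS muln_gt0 => /andP[].
Qed.

Fixpoint radix (e : nat -> int) (m : nat) : int :=
  if m is m'.+1 then (a m)%:Z * radix e m' + e m' else 0.

Definition digits (m : nat) (e : nat -> int) :=
  forall l, (l < m)%N -> 0 <= e l < (a l.+1)%:Z.

Lemma digits_le m m' e : (m' <= m)%N -> digits m e -> digits m' e.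
Proof. by move=> le_m'm de l lt_lm'; apply: de; apply: leq_trans le_m'm. Qed.

Lemma eq_radix m e e' : (forall l, (l < m)%N -> e l = e' l) -> radix e m = radix e' m.
Proof.
elim: m => [//|m IHm] ee' /=.
by rewrite IHm ?ee' // => l lt_lm; apply: ee'; apply: ltnW.
Qed.

Lemma radix_range m e : digits m e -> 0 <= radix e m < (d a m)%:Z.
Proof.
elim: m => [|m IHm] de /=; first by rewrite d0.
have := IHm (digits_le (leqnSn m) de); have := de m (ltnSn m).
by rewrite dS PoszM; nia.
Qed.

Lemma radix_inj m e e' : digits m e -> digits m e' -> radix e m = radix e' m ->
  forall l, (l < m)%N -> e l = e' l.
Proof.
elim: m => [//|m IHm] de de' /= eq_r l; rewrite ltnS leq_eqVlt.
rewrite ![_ * radix _ m]mulrC in eq_r.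
have [eq_q eq_em] := edivz_uniq (de m (ltnSn m)) (de' m (ltnSn m)) eq_r.
case/orP=> [/eqP -> //|lt_lm].
by apply: IHm lt_lm; rewrite ?eq_q //; apply: digits_le (leqnSn m) _.
Qed.

Lemma radix_surj m t : (0 < d a m)%N ->
  0 <= t < (d a m)%:Z -> exists2 e, digits m e & radix e m = t.
Proof.
elim: m t => [|m IHm] t; first by rewrite d0 => _ t01; exists (fun=> 0) => [//|/=]; lia.
rewrite dS muln_gt0 PoszM => /andP[dm_gt0 am_gt0].
set A := (a m.+1)%:Z; have A_gt0 : 0 < A by rewrite ltz_nat.
move=> t_range; have A_neq0 := lt0r_neq0 A_gt0.
have q_range : 0 <= (t %/ A)%Z < (d a m)%:Z.
  have := ltz_pmod t A_gt0; have := modz_ge0 t A_neq0; have := divz_eq t A.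
  by set q := (t %/ A)%Z; nia.
have [e de e_q] := IHm _ dm_gt0 q_range.
exists (fun l => if (l < m)%N then e l else (t %% A)%Z).
- move=> l; rewrite ltnS leq_eqVlt => /orP[/eqP ->|lt_lm]; last by rewrite lt_lm de.
  by rewrite ltnn modz_ge0 ?ltz_pmod.
- by rewrite /= ltnn (eq_radix (e' := e)) => [|l ->]; rewrite // e_q mulrC -divz_eq.
Qed.

End MixedRadix.

Section AlternatingSum.

Variable a : nat -> nat.

Definition flip_odd (f : nat -> int) (l : nat) : int :=
  if odd l then (a l.+1)%:Z - 1 - f l else f l.

Lemma flip_oddK f l : flip_odd (flip_odd f) l = f l.
Proof. by rewrite /flip_odd; case: odd => //; rewrite opprB addrC subrK. Qed.

Lemma digits_flip_odd m f : digits a m f -> digits a m (flip_odd f).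
Proof. by move=> df l /df; rewrite /flip_odd; case: odd => //; lia. Qed.

Definition psi_seq (m : nat) (f : nat -> int) : int :=
  \sum_(l < m) (-1) ^+ l * ((d a m %/ d a l.+1)%N)%:Z * (f l + 1).

Lemma eq_psi_seq m f g : (forall l, (l < m)%N -> f l = g l) -> psi_seq m f = psi_seq m g.
Proof. by move=> eq_fg; apply: eq_bigr => l _; rewrite eq_fg. Qed.

Lemma psi_seqS m f : (0 < d a m.+1)%N ->
  psi_seq m.+1 f = (a m.+1)%:Z * psi_seq m f + (-1) ^+ m * (f m + 1).
Proof.
move=> dSm_gt0; rewrite /psi_seq big_ord_recr /= divnn dSm_gt0 mulr1 mulr_sumr.
congr (_ + _); apply: eq_bigr => l _.
by rewrite dS -divn_mulAC ?dvdn_d // PoszM; ring.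
Qed.

Lemma psi_seq_radix m f : (0 < d a m)%N ->
  psi_seq m f = (odd m)%:Z + radix a (flip_odd f) m.
Proof.
elim: m => [|m IHm] dSm_gt0; first by rewrite /psi_seq big_ord0.
rewrite psi_seqS // IHm ?(d_gt0_le (leqnSn m)) //= /flip_odd -signr_odd.
by case: odd => /=; ring.
Qed.

Lemma psi_seq_range m f : (0 < d a m)%N -> digits a m f ->
  (odd m)%:Z <= psi_seq m f < (d a m)%:Z + (odd m)%:Z.
Proof.
move=> dm_gt0 /digits_flip_odd /radix_range.
by rewrite psi_seq_radix //; lia.
Qed.

Lemma psi_seq_inj m f g : (0 < d a m)%N -> digits a m f -> digits a m g ->
  psi_seq m f = psi_seq m g -> forall l, (l < m)%N -> f l = g l.
Proof.
move=> dm_gt0 df dg; rewrite !psi_seq_radix // => /addrI eq_r l lt_lm.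
have := radix_inj (digits_flip_odd df) (digits_flip_odd dg) eq_r lt_lm.
by rewrite /flip_odd; case: odd => //; lia.
Qed.

Lemma psi_seq_surj m t : (0 < d a m)%N ->
  (odd m)%:Z <= t < (d a m)%:Z + (odd m)%:Z -> exists2 f, digits a m f & psi_seq m f = t.
Proof.
move=> dm_gt0 t_range.
have [|e de e_t] := radix_surj (t := t - (odd m)%:Z) dm_gt0; first lia.
exists (flip_odd e); first exact: digits_flip_odd.
rewrite psi_seq_radix // (@eq_radix _ _ _ e) => [|l _]; last exact: flip_oddK.
by rewrite e_t addrC subrK.
Qed.

Lemma dvdz_psi_seq m f : (0 < d a m.+1)%N -> digits a m.+1 f ->
  ((a m.+1)%:Z %| psi_seq m.+1 f)%Z = (f m == (a m.+1)%:Z - 1).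
Proof.
move=> dSm_gt0 df; have /andP[fm_ge0 fm_lt] := df m (ltnSn m).
rewrite psi_seqS // rpredDl ?rpredMsign; last exact: dvdz_mulr (dvdzz _).
have [->|fm_neq] := eqVneq (f m) _; first by rewrite subrK dvdzz.
by apply/dvdz_mod0P; rewrite modz_small; lia.
Qed.

End AlternatingSum.

Definition rowseq n (k : 'rV[int]_n.+1) (l : nat) : int := k 0 (inord l).

Lemma rowseq_inj n (k k' : 'rV[int]_n.+1) :
  (forall l, (l < n.+1)%N -> rowseq k l = rowseq k' l) -> k = k'.
Proof.
move=> eq_kk'; apply/rowP => j.
by have := eq_kk' j (ltn_ord j); rewrite /rowseq inord_val.
Qed.

Lemma rowseq_row n (f : nat -> int) l : (l < n.+1)%N -> rowseq (\row_(j < n.+1) f j) l = f l.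
Proof. by move=> lt_ln; rewrite /rowseq mxE inordK. Qed.

Lemma psi_rowseq a n k : psi a n.+1 k = psi_seq a n.+1 (rowseq k).
Proof. by apply: eq_bigr => l _; rewrite /rowseq inord_val. Qed.

Lemma inK_digits a n k :
  inK a n.+1 k <-> digits a n.+1 (rowseq k) /\ rowseq k n != (a n.+1)%:Z - 1.
Proof.
split=> [/forallP k_range | [dk last_k]].
- split=> [l lt_ln|].
  + by have := k_range (inord l); rewrite /rowseq inordK //; case: eqP; lia.
  + by have := k_range (inord n); rewrite /rowseq inordK // eqxx; lia.
- apply/forallP => l; have := dk l (ltn_ord l); rewrite /rowseq inord_val.
  case: eqP => [[eq_ln]|_]; last by lia.
  have l_eq : l = inord n by apply: val_inj; rewrite /= inordK.
  by move: last_k; rewrite /rowseq -l_eq eq_ln; lia.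
Qed.

Lemma inIpE a n kappa : inIp a n.+1 kappa =
  ((odd n.+1)%:Z <= kappa < (d a n.+1)%:Z + (odd n.+1)%:Z) && ~~ ((a n.+1)%:Z %| kappa)%Z.
Proof.
rewrite /inIp; have [->|kappa_neq0] := eqVneq kappa 0; first by rewrite dvdz0 !andbF.
have [->|kappa_neqd] := eqVneq kappa (d a n.+1)%:Z.
  by rewrite [in (_ %| _)%Z]dS PoszM dvdz_mull ?dvdzz // !andbF.
by congr (_ && _); case: odd => /=; apply/idP/idP; lia.
Qed.

Section Omega.

Variables (a : nat -> nat) (n : nat) (f : nat -> int).
Hypothesis dn_gt0 : (0 < d a n)%N.

Definition omega_seq (j : nat) : rat :=
  (-1) ^+ j * ((d a j)%:R / (d a n)%:R * (psi_seq a n f)%:~R - (psi_seq a j f)%:~R).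

Lemma omega_seq_n : omega_seq n = 0.
Proof. by rewrite /omega_seq divff ?mul1r ?subrr ?mulr0 // pnatr_eq0 -lt0n. Qed.

Lemma omega_seqS j : (j < n)%N ->
  (a j.+1)%:R * omega_seq j + omega_seq j.+1 = (f j + 1)%:~R.
Proof.
move=> lt_jn; have dn_neq0 : (d a n)%:R != 0 :> rat by rewrite pnatr_eq0 -lt0n.
rewrite /omega_seq psi_seqS ?(d_gt0_le lt_jn) // dS natrM exprS.
rewrite !(intrD, intrM, intr_sign, mulrz_nat) -signr_odd.
by case: odd; field.
Qed.

Lemma omega_seq_itv : digits a n f -> f n.-1 != (a n)%:Z - 1 ->
  forall j, (j < n)%N -> 0 < omega_seq j < 1.
Proof.
move=> df last_f.
have natrz (m : nat) : m%:R = (m%:Z)%:~R :> rat by [].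
have unit_itv (A w : rat) : 0 < A * w < A -> 0 < w < 1 by move=> ?; nra.
suff omega_itv t j : (j < n)%N -> (j + t = n.-1)%N -> 0 < omega_seq j < 1.
  by move=> j lt_jn; apply: (omega_itv (n.-1 - j)%N) => //; lia.
elim: t j => [|t IHt] j lt_jn jt_n; apply: (unit_itv (a j.+1)%:R).
all: have -> : (a j.+1)%:R * omega_seq j = (f j + 1)%:~R - omega_seq j.+1.
all: try by rewrite -omega_seqS // addrK.
  have j_pred : n.-1 = j by lia.
  move: last_f (df j lt_jn); rewrite j_pred (_ : j.+1 = n); last by lia.
  by rewrite omega_seq_n subr0 natrz ltr0z ltr_int; lia.
have x_ge1 : (1 : rat) <= (f j + 1)%:~R by rewrite ler1z; have := df j lt_jn; lia.
have x_leA : (f j + 1)%:~R <= (a j.+1)%:R :> rat.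
  by rewrite natrz ler_int; have := df j lt_jn; lia.
by have /andP[] := IHt j.+1 ltac:(lia) ltac:(lia); lra.
Qed.

Lemma omega_kappa_psi_seq (i : 'I_n) :
  0 <= omega_seq i < 1 -> omega_kappa a n (psi_seq a n f) i = omega_seq i.
Proof.
move=> omega_itv; rewrite /omega_kappa /=.
suff -> : (-1) ^+ i * ((d a i)%:R / (d a n)%:R) * (psi_seq a n f)%:~R =
          ((-1) ^+ i * psi_seq a i f)%:~R + omega_seq i :> rat by exact: fract_intrD.
by rewrite /omega_seq intrM intr_sign; ring.
Qed.

End Omega.

Lemma mulmx_row_Emx_tr a n (u : nat -> rat) : u n = 0 ->
  (\row_(j < n) u j) *m (Emx a n)^T = \row_(j < n) ((a j.+1)%:R * u j + u j.+1).
Proof.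
move=> un_0; apply/rowP => j; rewrite !mxE.
under eq_bigr => l _ do rewrite !mxE mulrDr mulrCA mulrA.
rewrite big_split /= (sum_mul_eqn _ _ (fun l => (a j.+1)%:R * u l)) sum_mul_eqn ltn_ord.
congr (_ + _); case: ltnP => // le_nj.
by rewrite (_ : j.+1 = n) ?un_0 //; have := ltn_ord j; lia.
Qed.

Lemma Emx_unit a n : (0 < d a n)%N -> Emx a n \in unitmx.
Proof.
move=> dn_gt0; rewrite unitmxE -det_tr det_trig.
  rewrite unitfE; apply/prodf_neq0 => i _; rewrite !mxE eqxx mulr1 eqn_leq ltnn addr0.
  by rewrite pnatr_eq0 -lt0n (a_gt0_of_d _ dn_gt0) // ltn_ord.
apply/forallP => i; apply/forallP => j; apply/implyP => lt_ij; rewrite !mxE.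
by rewrite (gtn_eqF lt_ij) (gtn_eqF (ltn_trans lt_ij (ltnSn j))) mulr0 addr0.
Qed.

Section Bijection.

Variables (a : nat -> nat) (n : nat).
Hypothesis dn_gt0 : (0 < d a n.+1)%N.

Lemma psi_inIp k : inK a n.+1 k -> inIp a n.+1 (psi a n.+1 k).
Proof.
case/inK_digits => dk last_k.
by rewrite inIpE psi_rowseq psi_seq_range // dvdz_psi_seq.
Qed.

Lemma psi_inj : {in [pred k | inK a n.+1 k] &, injective (psi a n.+1)}.
Proof.
move=> k k' /[!inE] /inK_digits[dk _] /inK_digits[dk' _].
by rewrite !psi_rowseq => /(psi_seq_inj dn_gt0 dk dk') /rowseq_inj.
Qed.

Lemma psi_surj kappa : inIp a n.+1 kappa -> exists2 k, inK a n.+1 k & psi a n.+1 k = kappa.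
Proof.
rewrite inIpE => /andP[kappa_range kappa_ndvd].
have [f df psi_f] := psi_seq_surj dn_gt0 kappa_range.
have rowseq_f l : (l < n.+1)%N -> rowseq (\row_(j < n.+1) f j) l = f l by apply: rowseq_row.
exists (\row_(j < n.+1) f j); last by rewrite psi_rowseq -psi_f; apply: eq_psi_seq.
apply/inK_digits; split=> [l lt_ln|]; first by rewrite rowseq_f //; apply: df.
by move: kappa_ndvd; rewrite rowseq_f // -psi_f dvdz_psi_seq.
Qed.

Lemma enum_inIp : exists s : seq int,
  [/\ uniq s, forall kappa, (kappa \in s) = inIp a n.+1 kappa & size s = (d a n.+1 - d a n)%N].
Proof.
have A_gt0 : (0 < a n.+1)%N by apply: a_gt0_of_d dn_gt0; rewrite /= leqnn.
set A := a n.+1.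
exists [seq q%:Z * A%:Z + r%:Z | q <- iota 0 (d a n), r <- iota 1 A.-1]; split.
- apply: allpairs_uniq; rewrite ?iota_uniq // => -[q r] [q' r'] /allpairsP[[x y] [/= _]].
  rewrite mem_iota => y_range [-> ->] /allpairsP[[x' y'] [/= _]].
  rewrite mem_iota => y'_range [-> ->] /= eq_qr.
  have y_range' : 0 <= y%:Z < A%:Z by lia.
  have y'_range' : 0 <= y'%:Z < A%:Z by lia.
  by have [[->] [->]] := edivz_uniq y_range' y'_range' eq_qr.
- move=> kappa; rewrite /inIp dS PoszM -/A; apply/allpairsP/idP => [[[q r] [/=]]|].
    rewrite !mem_iota => q_range r_range ->.
    rewrite (_ : _ %| _ = false)%Z ?andbT; first nia.
    by apply/dvdz_mod0P; rewrite modzMDl modz_small; lia.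
  move=> /andP[/andP[kappa_ge1 kappa_le] /dvdz_mod0P kappa_ndvd].
  have A_gt0' : 0 < A%:Z by rewrite ltz_nat.
  have := divz_eq kappa A; have := ltz_pmod kappa A_gt0'.
  have := modz_ge0 kappa (lt0r_neq0 A_gt0').
  set q := (kappa %/ A)%Z; set r := (kappa %% A)%Z => r_ge0 r_lt kappa_qr.
  have q_range : 0 <= q < (d a n)%:Z by nia.
  by exists (`|q|%N, `|r|%N); rewrite /= !mem_iota; split; lia.
- by rewrite size_allpairs !size_iota dS -/A -subn1 mulnBr muln1.
Qed.

Lemma enum_inK : exists s : seq 'rV[int]_n.+1,
  [/\ uniq s, forall k, (k \in s) = inK a n.+1 k & size s = (d a n.+1 - d a n)%N].
Proof.
have [s [s_uniq s_inIp <-]] := enum_inIp.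
exact: (transport_enum (P := inK a n.+1) 0 psi_inj psi_inIp psi_surj s_uniq s_inIp).
Qed.

Lemma omega_psi k : inK a n.+1 k ->
  forall i, omega_kappa a n.+1 (psi a n.+1 k) i = omega_vec a n.+1 k 0 i.
Proof.
case/inK_digits => dk last_k i.
have omega_itv := omega_seq_itv dn_gt0 dk last_k.
have kE : map_mx (fun z : int => (z%:~R : rat)) (k + const_mx 1) =
          (\row_(j < n.+1) omega_seq a n.+1 (rowseq k) j) *m (Emx a n.+1)^T.
  rewrite mulmx_row_Emx_tr ?omega_seq_n //; apply/rowP => j.
  by rewrite !mxE omega_seqS // /rowseq inord_val.
rewrite psi_rowseq omega_kappa_psi_seq.
  by rewrite /omega_vec kE -mulmxA -trmx_mul mulVmx ?Emx_unit // trmx1 mulmx1 mxE.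
by have /andP[/ltW -> ->] := omega_itv i (ltn_ord i).
Qed.

End Bijection.

Unset Implicit Arguments.

Theorem proposition2p15 (n : nat) (a : nat -> nat)
    (hn : (1 <= n)%N) (ha : forall i, (1 <= i <= n)%N -> (2 <= a i)%N) :
  (* well-defined: psi maps K_n into I'_n *)
  (forall k : 'rV[int]_n, inK a n k -> inIp a n (psi a n k)) /\
  (* injective on K_n *)
  {in [pred k | inK a n k] &, injective (psi a n)} /\
  (* surjective onto I'_n *)
  (forall kappa : int, inIp a n kappa ->
     exists2 k : 'rV[int]_n, inK a n k & psi a n k = kappa) /\
  (* K_n has d_n - d_{n-1} elements *)
  (exists s : seq 'rV[int]_n, [/\ uniq s, (forall k, (k \in s) = inK a n k)
       & size s = (d a n - d a n.-1)%N]) /\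
  (* I'_n has d_n - d_{n-1} elements *)
  (exists s : seq int, [/\ uniq s, (forall kappa, (kappa \in s) = inIp a n kappa)
       & size s = (d a n - d a n.-1)%N]) /\
  (* omega_{psi(k),i} = omega_{k,i} *)
  (forall k : 'rV[int]_n, inK a n k ->
     forall i : 'I_n, omega_kappa a n (psi a n k) i = omega_vec a n k 0 i) /\
  (* psi(0,...,0) *)
  psi a n 0 = \sum_(l < n) (-1) ^+ l * ((d a n %/ d a l.+1)%N)%:Z.
Proof.
case: n hn ha => [//|n] _ ha.
have dn_gt0 : (0 < d a n.+1)%N by apply: d_gt0 => i /ha; apply: ltnW.
split; first exact: psi_inIp.
split; first exact: psi_inj.
split; first exact: psi_surj.
split; first exact: enum_inK.
split; first exact: enum_inIp.
split; first exact: omega_psi.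
by apply: eq_bigr => l _; rewrite mxE add0r mulr1.
Qed.
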